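(* For each positive integer $k$, let $w_k$ be the optimal value of the linear program \[ \max\sum_{j=1}^k\alpha_j\ \text{ s.t. } f+\sum_{j=1}^k d_j\le1;\ \alpha_j\le\alpha_{j+1}\ (1\le j<k);\ \alpha_j\le3\alpha_l+3d_j+3d_l\ (1\le j,l\le k);\ x_{jl}\ge\alpha_j-d_l\ (1\le j\le l\le k);\ \sum_{l=j}^k x_{jl}\le f\ (1\le j\le k);\ \alpha_j,d_j,f,x_{jl}\ge0. \] Then $\sup_{k \ge 1} w_k \ge 3.220$. *)

From HB Require Import structures.
From mathcomp Require Import all_boot all_order all_algebra.
From mathcomp Require Import boolp classical_sets reals constructive_ereal ereal.
Set Implicit Arguments. Unset Strict Implicit. Unset Printing Implicit Defensive.
Import Order.TTheory GRing.Theory Num.Theory.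
Local Open Scope ring_scope.
Local Open Scope classical_set_scope.

(* Indices 1..k of the paper are represented by 'I_k = {0,...,k-1}. *)
Definition lp_feasible (R : realType) (k : nat)
  (alpha d : 'I_k -> R) (f : R) (x : 'I_k -> 'I_k -> R) : Prop :=
  (f + \sum_(j < k) d j <= 1) /\
  (forall j l : 'I_k, nat_of_ord l = (nat_of_ord j).+1 -> alpha j <= alpha l) /\
  (forall j l : 'I_k, alpha j <= 3%:R * alpha l + 3%:R * d j + 3%:R * d l) /\
  (forall j l : 'I_k, (j <= l)%N -> alpha j - d l <= x j l) /\
  (forall j : 'I_k, \sum_(l < k | (j <= l)%N) x j l <= f) /\
  (forall j, 0 <= alpha j) /\ (forall j, 0 <= d j) /\ 0 <= f /\
  (forall j l, 0 <= x j l).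

Definition w (R : realType) (k : nat) : \bar R :=
  ereal_sup [set ((\sum_(j < k) alpha j)%:E) | alpha in
    [set alpha : 'I_k -> R | exists d f x, lp_feasible alpha d f x]].

(* Each w_k is a supremum over feasible points, so one feasible point for
   k = 700 whose objective exceeds 3.220 suffices.  Its coordinates are
   rationals over a common denominator, and feasibility is checked by exact
   binary integer arithmetic.  Two observations keep the check small: the
   variables x_jl can be taken to be the positive parts (alpha_j - d_l)^+, and
   the k^2 constraints alpha_j <= 3 alpha_l + 3 d_j + 3 d_l follow from the 2k
   constraints M <= alpha_l + d_l and alpha_j <= 3 M + 3 d_j for a single
   threshold M. *)

From Stdlib Require Import NArith Lia.
From HB Require Import structures.
From mathcomp Require Import all_boot all_order all_algebra.
From mathcomp Require Import boolp classical_sets reals constructive_ereal ereal.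
Import Order.TTheory GRing.Theory Num.Theory.
Local Open Scope ring_scope.
Local Open Scope classical_set_scope.

Lemma lp_objective_le_w (R : realType) k (alpha d : 'I_k -> R) f x :
  lp_feasible alpha d f x -> ((\sum_(j < k) alpha j)%:E <= w R k)%E.
Proof. by move=> feas; apply: ereal_sup_ubound; exists alpha => //; exists d, f, x. Qed.

Section PositivePartSolution.

Variables (R : realType) (k : nat) (alpha d : 'I_k -> R) (f M : R).

Hypotheses (alpha_ge0 : forall j, 0 <= alpha j) (d_ge0 : forall j, 0 <= d j)
  (f_ge0 : 0 <= f) (budget : f + \sum_(j < k) d j <= 1)
  (alpha_step : forall j l : 'I_k, l = j.+1 :> nat -> alpha j <= alpha l)
  (threshold_le : forall l, M <= alpha l + d l)
  (alpha_le_threshold : forall j, alpha j <= 3 * M + 3 * d j)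
  (pos_part_sum_le : forall j : 'I_k,
     \sum_(l < k | (j <= l)%N) Num.max (alpha j - d l) 0 <= f).

Lemma lp_feasible_pos_part :
  lp_feasible alpha d f (fun j l => Num.max (alpha j - d l) 0).
Proof.
split=> //; split=> //; split.
  move=> j l; apply: (le_trans (alpha_le_threshold j)).
  by rewrite addrAC lerD2r -mulrDr ler_wpM2l.
split; first by move=> j l _ /=; rewrite le_max lexx.
do 3!(split=> //).
by split=> // j l /=; rewrite le_max lexx orbT.
Qed.

End PositivePartSolution.

Definition Nr {R : pzSemiRingType} (n : N) : R := (N.to_nat n)%:R.

Lemma Nr_add (R : pzSemiRingType) a b : Nr (a + b)%num = Nr a + Nr b :> R.
Proof. by rewrite /Nr Nnat.N2Nat.inj_add natrD. Qed.

Lemma Nr_mul (R : pzSemiRingType) a b : Nr (a * b)%num = Nr a * Nr b :> R.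
Proof. by rewrite /Nr Nnat.N2Nat.inj_mul natrM. Qed.

Lemma Nr_sub (R : realDomainType) a b :
  Nr (a - b)%num = Num.max (Nr a - Nr b) 0 :> R.
Proof.
rewrite /Nr Nnat.N2Nat.inj_sub minusE.
have [ba | ab] := leqP (N.to_nat b) (N.to_nat a).
  by rewrite natrB // max_l // subr_ge0 ler_nat.
by rewrite (eqP (ltnW ab)) max_r // subr_le0 ler_nat ltnW.
Qed.

Lemma Nr_le (R : numDomainType) a b : (a <=? b)%num -> Nr a <= Nr b :> R.
Proof. by move/N.leb_le=> ab; rewrite ler_nat; apply/ssrnat.leP; lia. Qed.

Lemma Nr_gt0 (R : numDomainType) a : (0 <? a)%num -> 0 < Nr a :> R.
Proof. by move/N.ltb_lt=> a_gt0; rewrite ltr0n; apply/ssrnat.ltP; lia. Qed.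

Definition Nsum (s : seq N) : N := foldr N.add 0%num s.

Lemma Nr_sum (R : pzSemiRingType) s : Nr (Nsum s) = \sum_(n <- s) Nr n :> R.
Proof. by elim: s => [|n s IHs]; rewrite ?big_nil ?big_cons //= Nr_add IHs. Qed.

Lemma big_ord_nth_drop {R : nmodType} {T : Type} (x0 : T) (s : seq T) n j
    (G : T -> R) : size s = n ->
  \sum_(l < n | (j <= l)%N) G (nth x0 s l) = \sum_(e <- drop j s) G e.
Proof.
move=> <-.
transitivity (\sum_(j <= l < size s) G (nth x0 s l)).
  by rewrite big_geq_mkord.
rewrite /index_iota -(big_map (nth x0 s) predT G) map_nth_iota //.
by rewrite take_oversize // size_drop.
Qed.

Definition lp_certificate (k : nat) (A D : seq N) (F M Den : N) : bool :=
  [&& size A == k, size D == k, (0 <? Den)%num, (F + Nsum D <=? Den)%num,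
      sorted N.leb A &
      all (fun j => let a := nth 0%num A j in let e := nth 0%num D j in
             [&& (M <=? a + e)%num, (a <=? 3 * M + 3 * e)%num &
                 (Nsum [seq a - e' | e' <- drop j D] <=? F)%num])
          (iota 0 k)].

Lemma lp_certificate_sound (R : realType) {k : nat} {A D : seq N} {F M Den : N} :
  lp_certificate k A D F M Den -> ((Nr (Nsum A) / Nr Den : R)%:E <= w R k)%E.
Proof.
case/and4P=> /eqP size_A /eqP size_D /(Nr_gt0 R) Den_gt0.
case/and3P=> budget /sortedP mono /allP cert.
pose r n : R := Nr n / Nr Den.
have r_le a b : (a <=? b)%num -> r a <= r b.
  by move/(Nr_le R)=> ab; rewrite ler_pM2r ?invr_gt0.
have r_add a b : r (a + b)%num = r a + r b by rewrite /r Nr_add mulrDl.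
have r_3M a : 3 * r a = r (3 * a)%num by rewrite /r Nr_mul mulrA.
have r_sub a b : r (a - b)%num = Num.max (r a - r b) 0.
  by rewrite /r Nr_sub maxr_pMl ?invr_ge0 ?ltW // mul0r mulrBl.
have r_sum s : r (Nsum s) = \sum_(n <- s) r n by rewrite /r Nr_sum mulr_suml.
have sum_nth s : size s = k -> \sum_(j < k) r (nth 0%num s j) = r (Nsum s).
  by move=> size_s; rewrite r_sum (big_nth 0%num) size_s big_mkord.
pose alpha (j : 'I_k) := r (nth 0%num A j).
pose d (j : 'I_k) := r (nth 0%num D j).
have in_iota (j : 'I_k) : nat_of_ord j \in iota 0 k.
  by rewrite mem_iota add0n ltn_ord.
have cert_at (j : 'I_k) := cert j (in_iota j).
rewrite -/(r (Nsum A)) -(sum_nth A) //.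
apply: (@lp_objective_le_w _ _ alpha d (r F)).
apply: (@lp_feasible_pos_part _ _ _ _ _ (r M)).
- by move=> j; rewrite divr_ge0 ?ler0n ?ltW.
- by move=> j; rewrite divr_ge0 ?ler0n ?ltW.
- by rewrite divr_ge0 ?ler0n ?ltW.
- by rewrite sum_nth // -r_add -(divff (lt0r_neq0 Den_gt0)) r_le.
- by move=> j l lj; apply: r_le; rewrite lj mono // size_A -lj ltn_ord.
- by move=> l; have /and3P[+ _ _] := cert_at l; rewrite -r_add => /r_le.
- by move=> j; have /and3P[_ + _] := cert_at j; rewrite !r_3M -r_add => /r_le.
move=> j; have /and3P[_ _ /r_le] := cert_at j; apply: le_trans.
pose pos_part e := r (nth 0%num A j - e)%num.
rewrite r_sum big_map -(big_ord_nth_drop 0%num _ _ j pos_part size_D).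
by under [X in _ <= X]eq_bigr do rewrite /pos_part r_sub.
Qed.

(* A near-optimal solution for k = 700: alpha_j = cert_alpha_j / cert_den,
   d_j = cert_d_j / cert_den, f = cert_f / cert_den, with threshold
   M = cert_M / cert_den. *)
Definition cert_alpha : seq N := ([::
  2075368; 2077991; 2080627; 2083278; 2085943; 2088623; 2091318; 2094028;
  2096753; 2099493; 2102248; 2105019; 2107805; 2110607; 2113419; 2116247;
  2119091; 2121951; 2124827; 2127719; 2130627; 2133552; 2136494; 2139452;
  2142428; 2145420; 2148425; 2151445; 2154484; 2157539; 2160613; 2163704;
  2166812; 2169939; 2173084; 2176248; 2179429; 2182627; 2185840; 2189071;
  2192322; 2195591; 2198880; 2202188; 2205516; 2208863; 2212231; 2215618;
  2219022; 2222443; 2225884; 2229346; 2232828; 2236332; 2239856; 2243402;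
  2246969; 2250558; 2254168; 2257793; 2261440; 2265109; 2268801; 2272515;
  2276252; 2280012; 2283795; 2287601; 2291429; 2295275; 2299144; 2303037;
  2306955; 2310897; 2314863; 2318855; 2322871; 2326913; 2330972; 2335056;
  2339166; 2343302; 2347463; 2351652; 2355866; 2360108; 2364377; 2368666;
  2372980; 2377322; 2381692; 2386090; 2390517; 2394972; 2399455; 2403968;
  2408500; 2413062; 2417654; 2422276; 2426928; 2431610; 2436324; 2441068;
  2445836; 2450633; 2455462; 2460322; 2465215; 2470141; 2475099; 2480091;
  2485108; 2490155; 2495237; 2500353; 2505503; 2510689; 2515909; 2521165;
  2526445; 2531761; 2537113; 2542502; 2547928; 2553391; 2558892; 2564423;
  2569987; 2575590; 2581232; 2586913; 2592634; 2598395; 2604190; 2610018;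
  2615887; 2621798; 2627750; 2633744; 2639781; 2645854; 2651962; 2658114;
  2664310; 2670551; 2676836; 2683166; 2689531; 2695937; 2702390; 2708890;
  2715437; 2722028; 2728647; 2735286; 2741957; 2748661; 2755398; 2762168;
  2768971; 2775793; 2782647; 2789535; 2796457; 2803413; 2810404; 2817419;
  2824463; 2831542; 2838656; 2845806; 2852993; 2860208; 2867449; 2874727;
  2882041; 2889394; 2896783; 2904204; 2911651; 2919136; 2926660; 2934222;
  2941824; 2949458; 2957119; 2964819; 2972560; 2980342; 2988164; 2996019;
  3003903; 3011829; 3019797; 3027807; 3035860; 3043942; 3052060; 3060220;
  3068424; 3076673; 3084966; 3093284; 3101644; 3110050; 3118501; 3126998;
  3135537; 3144104; 3152718; 3161379; 3170088; 3178845; 3187636; 3196466;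
  3205345; 3214274; 3223252; 3232278; 3241332; 3250437; 3259593; 3268801;
  3278061; 3287356; 3296695; 3306087; 3315533; 3325033; 3334579; 3344162;
  3353799; 3363492; 3373241; 3383047; 3392881; 3402773; 3412723; 3422731;
  3432798; 3442900; 3453056; 3463272; 3473549; 3483887; 3494267; 3504698;
  3515191; 3525747; 3536367; 3547033; 3557749; 3568530; 3579377; 3590289;
  3601252; 3612265; 3623345; 3634494; 3645712; 3656980; 3668302; 3679694;
  3691157; 3702692; 3714276; 3725919; 3737636; 3749427; 3761292; 3773203;
  3785181; 3797236; 3809368; 3821577; 3833827; 3846154; 3858561; 3871048;
  3883606; 3896215; 3908907; 3921681; 3934539; 3947457; 3960442; 3973513;
  3986670; 3999915; 4013206; 4026583; 4040050; 4053607; 4067240; 4080934;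
  4094721; 4108602; 4122576; 4136607; 4150725; 4164940; 4179252; 4193646;
  4208106; 4222667; 4237329; 4252094; 4266913; 4281833; 4296857; 4311986;
  4327195; 4342486; 4357885; 4373393; 4389002; 4404677; 4420464; 4436365;
  4452381; 4468460; 4484650; 4500958; 4517385; 4533893; 4550501; 4567230;
  4584084; 4601036; 4618077; 4635244; 4652540; 4669948; 4687439; 4705061;
  4722816; 4740696; 4758653; 4776747; 4794979; 4813348; 4831790; 4850374;
  4869101; 4887973; 4906921; 4926014; 4945257; 4964650; 4984122; 5003745;
  5023523; 5043457; 5063472; 5083645; 5103980; 5124474; 5145055; 5165801;
  5186715; 5207789; 5228959; 5250302; 5271820; 5293494; 5315277; 5337241;
  5359388; 5381681; 5404104; 5426716; 5449488; 5472385; 5495475; 5518741;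
  5542125; 5565709; 5589481; 5613368; 5637459; 5661753; 5686157; 5710773;
  5735602; 5760541; 5785696; 5811072; 5836567; 5862279; 5888218; 5914286;
  5940571; 5967092; 5993749; 6020627; 6047747; 6075012; 6102501; 6130240;
  6158132; 6186251; 6214628; 6243167; 6271937; 6300974; 6330178; 6359621;
  6389339; 6419231; 6449368; 6479790; 6510391; 6541246; 6572395; 6603729;
  6635325; 6667226; 6699316; 6731680; 6764358; 6797230; 6830387; 6863870;
  6897549; 6931527; 6965842; 7000356; 7035184; 7070360; 7105738; 7141445;
  7177513; 7213785; 7250403; 7287395; 7324591; 7362153; 7400103; 7438257;
  7476797; 7515739; 7554885; 7594439; 7634403; 7674584; 7715190; 7756212;
  7797469; 7839166; 7881285; 7923658; 7966489; 8009746; 8053278; 8097285;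
  8141725; 8186460; 8231606; 8277109; 8322842; 8369001; 8415522; 8462287;
  8509493; 8557071; 8604904; 8653193; 8701870; 8750808; 8800217; 8850036;
  8900117; 8950686; 9001693; 9052958; 9104728; 9156972; 9209463; 9262479;
  9316010; 9369773; 9424079; 9478936; 9534034; 9589678; 9645894; 9702401;
  9759433; 9817059; 9875037; 9933511; 9992601; 10052116; 10112086; 10172697;
  10233819; 10295345; 10357536; 10420340; 10483483; 10547318; 10611857;
  10676708; 10742253; 10808531; 10875241; 10942565; 11010653; 11079314;
  11148493; 11218467; 11289177; 11360289; 11432229; 11505013; 11578220;
  11652211; 11727083; 11802574; 11878706; 11955757; 12033656; 12112024;
  12191351; 12271659; 12352495; 12434204; 12516936; 12600476; 12684675;
  12769945; 12856308; 12943152; 13031079; 13120152; 13210049; 13300763;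
  13392676; 13485812; 13579448; 13674342; 13770522; 13867625; 13965649;
  14065024; 14165779; 14267135; 14369868; 14474053; 14579379; 14685648;
  14793444; 14902803; 15013005; 15124606; 15237854; 15352634; 15468250;
  15585602; 15704732; 15825148; 15946836; 16070402; 16195893; 16322416;
  16450676; 16580972; 16713285; 16846516; 16981904; 17119504; 17258978;
  17399769; 17542906; 17688454; 17835753; 17984777; 18136363; 18290579;
  18446456; 18604473; 18765291; 18928991; 19094304; 19262167; 19433105;
  19607209; 19782941; 19961621; 20143685; 20329237; 20516521; 20707121;
  20901458; 21099651; 21299797; 21503578; 21711500; 21923700; 22138240;
  22356649; 22579666; 22807448; 23038178; 23272888; 23512746; 23757933;
  24006979; 24259675; 24469531; 24683317; 24901152; 25123159; 25349470;
  25580217; 25815543; 26055595; 26300525; 26550496; 26805674; 27066235;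
  27332364; 27604253; 27882105; 28166132; 28456555; 28753609; 29057539;
  29368604; 29687075; 30013239; 30347397; 30689867; 31040986; 31401107;
  31770607; 32149882; 32539352; 32939464; 33350689; 33773532; 34208525;
  34656237; 35117274; 35592282; 36081950; 36587017; 37108272; 37646561;
  38202793; 38777945; 39373067; 39989293; 40627846; 41290049; 41977336;
  42691262; 43433518; 44205946; 45010560; 45849559; 46725355; 47640603;
  48598222; 49601443; 50653841; 51759391; 52922521; 54148185; 55441942;
  56810052; 58259598; 59798621; 61436300; 63183158; 65051325; 67054867;
  69210192; 71536575; 74056823; 76798145; 79793294; 80917387; 80917387;
  80917387; 80917387; 80917387; 80917387; 80917387; 80917387; 80917387;
  80917387; 80917387; 80917387; 80917387; 80917387; 80917387; 80917387;
  80917387])%num.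
Definition cert_d : seq N := ([::
  638540; 635917; 633281; 630630; 627965; 625285; 622590; 619880; 617155;
  614415; 611660; 608889; 606103; 603301; 600489; 597661; 594817; 591957;
  589081; 586189; 583281; 580356; 577414; 574456; 571480; 568488; 565483;
  562463; 559424; 556369; 553295; 550204; 547096; 543969; 540824; 537660;
  534479; 531281; 528068; 524837; 521586; 518317; 515028; 511720; 508392;
  505045; 501677; 498290; 494886; 491465; 488024; 484562; 481080; 477576;
  474052; 470506; 466939; 463350; 459740; 456115; 452468; 448799; 445107;
  441393; 437656; 433896; 430113; 426307; 422479; 418633; 414764; 410871;
  406953; 403011; 399045; 395053; 391037; 386995; 382936; 378852; 374742;
  370606; 366445; 362256; 358042; 353800; 349531; 345242; 340928; 336586;
  332216; 327818; 323391; 318936; 314453; 309940; 305408; 300846; 296254;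
  291632; 286980; 282298; 277584; 272840; 268072; 263275; 258446; 253586;
  248693; 243767; 238809; 233817; 228800; 223753; 218671; 213555; 208405;
  203219; 197999; 192743; 187463; 182147; 176795; 171406; 165980; 160517;
  155016; 149485; 143921; 138318; 132676; 126995; 121274; 115513; 109718;
  103890; 98021; 92110; 86158; 80164; 74127; 68054; 61946; 55794; 49598;
  43357; 37072; 30742; 24377; 17971; 11518; 5018; 0; 0; 0; 0; 0; 0; 0; 0; 0;
  0; 0; 0; 0; 0; 0; 0; 0; 0; 0; 0; 0; 0; 0; 0; 0; 0; 0; 0; 0; 0; 0; 0; 0; 0;
  0; 0; 0; 0; 0; 0; 0; 0; 0; 0; 0; 0; 0; 0; 0; 0; 0; 0; 0; 0; 0; 0; 0; 0; 0;
  0; 0; 0; 0; 0; 0; 0; 0; 0; 0; 0; 0; 0; 0; 0; 0; 0; 0; 0; 0; 0; 0; 0; 0; 0;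
  0; 0; 0; 0; 0; 0; 0; 0; 0; 0; 0; 0; 0; 0; 0; 0; 0; 0; 0; 0; 0; 0; 0; 0; 0;
  0; 0; 0; 0; 0; 0; 0; 0; 0; 0; 0; 0; 0; 0; 0; 0; 0; 0; 0; 0; 0; 0; 0; 0; 0;
  0; 0; 0; 0; 0; 0; 0; 0; 0; 0; 0; 0; 0; 0; 0; 0; 0; 0; 0; 0; 0; 0; 0; 0; 0;
  0; 0; 0; 0; 0; 0; 0; 0; 0; 0; 0; 0; 0; 0; 0; 0; 0; 0; 0; 0; 0; 0; 0; 0; 0;
  0; 0; 0; 0; 0; 0; 0; 0; 0; 0; 0; 0; 0; 0; 0; 0; 0; 0; 0; 0; 0; 0; 0; 0; 0;
  0; 0; 0; 0; 0; 0; 0; 0; 0; 0; 0; 0; 0; 0; 0; 0; 0; 0; 0; 0; 0; 0; 0; 0; 0;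
  0; 0; 0; 0; 0; 0; 0; 0; 0; 0; 0; 0; 0; 0; 0; 0; 0; 0; 0; 0; 0; 0; 0; 0; 0;
  0; 0; 0; 0; 0; 0; 0; 0; 0; 0; 0; 0; 0; 0; 0; 0; 0; 0; 0; 0; 0; 0; 0; 0; 0;
  0; 0; 0; 0; 0; 0; 0; 0; 0; 0; 0; 0; 0; 0; 0; 0; 0; 0; 0; 0; 1; 14912; 29961;
  45129; 60373; 75759; 91266; 106855; 122590; 138449; 154394; 170490; 186716;
  203028; 219498; 236104; 252798; 269654; 286657; 303745; 321002; 338416;
  355913; 373585; 391429; 409350; 427452; 445738; 464104; 482652; 501390;
  520226; 539237; 558445; 577771; 597263; 616959; 636798; 656788; 676991;
  697365; 717874; 738604; 759539; 780587; 801865; 823378; 844995; 866843;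
  888936; 911173; 933614; 956310; 979197; 1002257; 1025581; 1049151; 1072855;
  1096835; 1121097; 1145499; 1170163; 1195120; 1220284; 1245661; 1271345;
  1297311; 1323434; 1349876; 1376645; 1403591; 1430827; 1458404; 1486251;
  1514317; 1542741; 1571528; 1600476; 1629785; 1659476; 1689442; 1719680;
  1750318; 1781363; 1812575; 1844206; 1876266; 1908634; 1941309; 1974434;
  2008019; 2041804; 2076048; 2110777; 2145885; 2181308; 2217240; 2253693;
  2290427; 2327628; 2365377; 2403637; 2442176; 2481293; 2521003; 2561142;
  2601704; 2642893; 2684723; 2726898; 2769651; 2813083; 2857187; 2901598;
  2946727; 2992594; 3039085; 3086015; 3133728; 3182244; 3231343; 3281018;
  3331547; 3382952; 3434911; 3487583; 3541189; 3595756; 3650860; 3706815;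
  3763794; 3821829; 3880406; 3939966; 4000654; 4062505; 4124933; 4188466;
  4253245; 4319309; 4386025; 4453952; 4523259; 4593992; 4665506; 4738309;
  4812648; 4888575; 4965485; 5043722; 5123674; 5205403; 5288419; 5372651;
  5442603; 5513865; 5586476; 5660479; 5735916; 5812831; 5891273; 5971291;
  6052934; 6136258; 6221317; 6308171; 6396880; 6487510; 6580127; 6674803;
  6771611; 6870629; 6971939; 7075627; 7181784; 7290505; 7401891; 7516048;
  7633088; 7753128; 7876295; 8002720; 8132543; 8265914; 8402989; 8543936;
  8688934; 8838171; 8991850; 9150186; 9313409; 9481765; 9655516; 9834946;
  10020357; 10212074; 10410448; 10615857; 10828708; 11049442; 11278538;
  11516513; 11763932; 12021408; 12289612; 12569279; 12861211; 13166293;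
  13485500; 13819907; 14170706; 14539223; 14926933; 15335487; 15766740;
  16222776; 16705958; 17218966; 17764859; 18347145; 18969867; 19637715;
  20356156; 21131617; 21971700; 22885474; 23883857; 24258555; 24258555;
  24258555; 24258555; 24258555; 24258555; 24258555; 24258555; 24258555;
  24258555; 24258555; 24258555; 24258555; 24258555; 24258555; 24258555;
  24258555])%num.
Definition cert_f : N := 1000000000%num.
Definition cert_M : N := 2713908%num.
Definition cert_den : N := 2555376019%num.

Theorem lemma4 (R : realType) :
  (((3220%:R / 1000%:R : R))%:E <= ereal_sup [set w R k | k in [set k : nat | (0 < k)%N]])%E.
Proof.
have cert : lp_certificate 700%N cert_alpha cert_d cert_f cert_M cert_den.
  by vm_compute.
have value : (3220 * cert_den <=? 1000 * Nsum cert_alpha)%num by vm_compute.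
apply: (@le_trans _ _ (w R 700%N)); last by apply: ereal_sup_ubound; exists 700%N.
apply: (le_trans _ (lp_certificate_sound R cert)); rewrite lee_fin.
have den_gt0 : 0 < Nr cert_den :> R by apply: Nr_gt0.
have thousand_gt0 : 0 < 1000%:R :> R by rewrite ltr0n.
rewrite (ler_pdivlMr _ _ den_gt0) mulrAC (ler_pdivrMr _ _ thousand_gt0).
(* [Nr] goes through unary [nat]: only small constants may be evaluated. *)
have Nr3220 : Nr 3220 = 3220%:R :> R by [].
have Nr1000 : Nr 1000 = 1000%:R :> R by [].
by move: value => /(Nr_le R); rewrite !Nr_mul Nr3220 Nr1000 [_ * 1000%:R]mulrC.
Qed.
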